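(* Let $L,V,W,K,T>0$, $\pi\in(0,1)$, $\bar K=\frac{W}{V+W}K$, $C=V\bar K$. Write $\frac{L}{V}=\theta_1T$ with $\theta_1=j_1+\alpha_1$, $j_1=\lfloor \frac{L}{VT}\rfloor$, $0\le\alpha_1<1$, and $\frac{L}{W}=\theta_2T$ with $\theta_2=j_2+\alpha_2$, $j_2=\lfloor\frac{L}{WT}\rfloor$, $0\le\alpha_2<1$. Define $$k_1=\frac{j_1+\min\{\alpha_1/\pi,1\}}{j_1+\alpha_1}\,\pi\bar K,\qquad k_2=K-\frac{j_2+\min\{\alpha_2/\pi,1\}}{j_2+\alpha_2}\,\pi\frac{C}{W}.$$ Then $$\pi\bar K\le k_1\le\bar K\le k_2\le K-\pi\frac{C}{W}.$$ Moreover, $k_1=\pi\bar K$ if and only if $\alpha_1=0$; $k_1=\bar K$ if and only if $\pi T\ge \frac LV$; $k_2=K-\pi\frac CW$ if and only if $\alpha_2=0$; and $k_2=\bar K$ if and only if $\pi T\ge\frac LW$. *)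

From mathcomp Require Import all_boot all_order all_algebra.
From mathcomp Require Import reals.
Set Implicit Arguments. Unset Strict Implicit. Unset Printing Implicit Defensive.
Import Order.TTheory GRing.Theory Num.Theory.
Local Open Scope ring_scope.

Section Defs.
Variable R : realType.

Definition jpart (theta : R) : R := (Num.floor theta)%:~R.
Definition apart (theta : R) : R := theta - jpart theta.

Definition Kbar (V W K : R) : R := W / (V + W) * K.
Definition Ccap (V W K : R) : R := V * Kbar V W K.

Definition theta1 (L V T : R) : R := L / (V * T).
Definition theta2 (L W T : R) : R := L / (W * T).

Definition k1 (L V W K T p : R) : R :=
  let th := theta1 L V T in
  (jpart th + Num.min (apart th / p) 1) / (jpart th + apart th) * p * Kbar V W K.

Definition k2 (L V W K T p : R) : R :=
  let th := theta2 L W T in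
  K - (jpart th + Num.min (apart th / p) 1) / (jpart th + apart th) * p
        * (Ccap V W K / W).
End Defs.

From mathcomp Require Import all_boot all_order all_algebra.
From mathcomp Require Import reals.
From mathcomp Require Import ring lra.

Set Implicit Arguments.
Unset Strict Implicit.
Unset Printing Implicit Defensive.
Import Order.TTheory GRing.Theory Num.Theory.
Local Open Scope ring_scope.

(** With [j] and [a] the integer and fractional parts of [theta], the factor
    multiplying [Kbar] in [k1] (and [C / W] in [k2]) is
    [(j p + min a p) / (j + a)]. Against [p (j + a)] the numerator gains
    [min a p - p a >= 0], which vanishes exactly when [a = 0]; against [j + a]
    it loses [j (1 - p) >= 0] and [a - min a p >= 0], which both vanish exactly
    when [theta <= p]. As [Kbar = K - C / W], the theorem is these two bounds
    and their equality cases, scaled by [Kbar] and by [C / W]. *)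

Section FloorDecomposition.
Variable R : realType.
Implicit Types th : R.

Lemma jpart_add_apart th : jpart th + apart th = th.
Proof. by rewrite /apart addrC subrK. Qed.

Lemma jpart_ge0 th : 0 <= th -> 0 <= jpart th.
Proof. by move=> th0; rewrite /jpart ler0z floor_ge0. Qed.

Lemma jpart_eq0 th : 0 <= th -> th < 1 -> jpart th = 0.
Proof.
move=> th0 th1; rewrite /jpart.
by have -> : Num.floor th = 0 by apply/le_anti; rewrite floor_le0 th1 floor_ge0.
Qed.

Lemma apart_ge0 th : 0 <= apart th.
Proof. by rewrite /apart subr_ge0 /jpart floor_le. Qed.

Lemma apart_lt1 th : apart th < 1.
Proof. by have := floorD1_gt th; rewrite intrD /apart /jpart; lra. Qed.

End FloorDecomposition.

Lemma mulr_id_eq0 (R : idomainType) (x y : R) : y != 1 -> x * y = x -> x = 0.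
Proof.
move=> y_neq1 /eqP; rewrite -subr_eq0 -{2}[x]mulr1 -mulrBr mulf_eq0 subr_eq0.
by rewrite (negPf y_neq1) orbF => /eqP.
Qed.

Section SplitRatio.
Variables (R : realFieldType) (p j a : R).
Hypotheses (p_gt0 : 0 < p) (p_lt1 : p < 1).
Hypotheses (j_ge0 : 0 <= j) (a_ge0 : 0 <= a) (a_lt1 : a < 1) (ja_gt0 : 0 < j + a).

Definition split_ratio : R := (j * p + Num.min a p) / (j + a).

Lemma split_ratioP x : split_ratio = x <-> j * p + Num.min a p = x * (j + a).
Proof. by rewrite /split_ratio; split=> [<-|->]; rewrite ?divfK ?mulfK ?lt0r_neq0. Qed.

Lemma split_ratio_ge : p <= split_ratio.
Proof.
rewrite ler_pdivlMr // mulrDr [p * j]mulrC lerD2l le_min.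
by rewrite (ler_piMl a_ge0 (ltW p_lt1)) (ler_piMr (ltW p_gt0) (ltW a_lt1)).
Qed.

Lemma split_ratio_le1 : split_ratio <= 1.
Proof.
rewrite ler_pdivrMr // mul1r.
by apply: lerD; [exact: ler_piMr j_ge0 (ltW p_lt1) | rewrite ge_min lexx].
Qed.

Lemma split_ratio_eq : split_ratio = p <-> a = 0.
Proof.
apply: iff_trans (split_ratioP p) _; rewrite mulrDr [p * j]mulrC.
split=> [/addrI|->]; last by rewrite mulr0 min_l ?ltW.
have [_ aE|pa pE] := leP a p.
- by apply: mulr_id_eq0 (negbT (lt_eqF p_lt1)) _; rewrite mulrC.
- have p0 : p = 0 by apply: mulr_id_eq0 (negbT (lt_eqF a_lt1)) _.
  by move: p_gt0; rewrite p0 ltxx.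
Qed.

Lemma split_ratio_eq1 : split_ratio = 1 <-> j = 0 /\ a <= p.
Proof.
apply: iff_trans (split_ratioP 1) _; rewrite mul1r.
split=> [E|[-> ap]]; last by rewrite mul0r !add0r min_l.
have jp : j * p <= j := ler_piMr j_ge0 (ltW p_lt1).
have ma : Num.min a p <= a by rewrite ge_min lexx.
have jpE : j * p = j by lra.
have maE : Num.min a p = a by lra.
by split; [exact: mulr_id_eq0 (negbT (lt_eqF p_lt1)) jpE | exact/min_idPl].
Qed.

End SplitRatio.

Section KRatio.
Variables (R : realType) (p th : R).
Hypotheses (p_gt0 : 0 < p) (p_lt1 : p < 1) (th_gt0 : 0 < th).

Definition kratio : R :=
  (jpart th + Num.min (apart th / p) 1) / (jpart th + apart th) * p.

Lemma kratioE : kratio = split_ratio p (jpart th) (apart th).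
Proof.
by rewrite /kratio /split_ratio mulrAC mulrDl minr_pMl ?ltW // divfK ?lt0r_neq0 ?mul1r.
Qed.

Let j_ge0 : 0 <= jpart th. Proof. exact/jpart_ge0/ltW. Qed.
Let a_ge0 : 0 <= apart th. Proof. exact: apart_ge0. Qed.
Let a_lt1 : apart th < 1. Proof. exact: apart_lt1. Qed.
Let ja_gt0 : 0 < jpart th + apart th. Proof. by rewrite jpart_add_apart. Qed.

Lemma kratio_ge : p <= kratio.
Proof. by rewrite kratioE; apply: split_ratio_ge. Qed.

Lemma kratio_le1 : kratio <= 1.
Proof. by rewrite kratioE; apply: split_ratio_le1. Qed.

Lemma kratio_eq : kratio = p <-> apart th = 0.
Proof. by rewrite kratioE; apply: split_ratio_eq. Qed.

Lemma kratio_eq1 : kratio = 1 <-> th <= p.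
Proof.
rewrite kratioE split_ratio_eq1 //.
split=> [[j0 ap]|thp]; first by rewrite -(jpart_add_apart th) j0 add0r.
have j0 : jpart th = 0 by apply: jpart_eq0; [exact: ltW | exact: le_lt_trans thp p_lt1].
by split; rewrite // /apart j0 subr0.
Qed.

End KRatio.

Lemma Kbar_eq_subCcap (R : realType) (V W K : R) :
  0 < V -> 0 < W -> Kbar V W K = K - Ccap V W K / W.
Proof.
move=> V_gt0 W_gt0; rewrite /Ccap /Kbar; field.
by rewrite !lt0r_neq0 ?addr_gt0.
Qed.

Lemma theta_le (R : realType) (L V T p : R) :
  0 < T -> (L / (V * T) <= p) = (L / V <= p * T).
Proof. by move=> T_gt0; rewrite invfM mulrA ler_pdivrMr. Qed.

Theorem lemma3p1 (R : realType) (L V W K T p : R)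
  (hL : 0 < L) (hV : 0 < V) (hW : 0 < W) (hK : 0 < K) (hT : 0 < T)
  (hp0 : 0 < p) (hp1 : p < 1) :
  [/\ p * Kbar V W K <= k1 L V W K T p,
      k1 L V W K T p <= Kbar V W K,
      Kbar V W K <= k2 L V W K T p,
      k2 L V W K T p <= K - p * (Ccap V W K / W)
    & [/\ k1 L V W K T p = p * Kbar V W K <-> apart (theta1 L V T) = 0,
          k1 L V W K T p = Kbar V W K <-> L / V <= p * T,
          k2 L V W K T p = K - p * (Ccap V W K / W) <-> apart (theta2 L W T) = 0
        & k2 L V W K T p = Kbar V W K <-> L / W <= p * T]].
Proof.
have th1_gt0 : 0 < theta1 L V T by rewrite divr_gt0 ?mulr_gt0.
have th2_gt0 : 0 < theta2 L W T by rewrite divr_gt0 ?mulr_gt0.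
have -> : k1 L V W K T p = kratio p (theta1 L V T) * Kbar V W K by [].
have -> : k2 L V W K T p = K - kratio p (theta2 L W T) * (Ccap V W K / W) by [].
rewrite -!theta_le //.
have Kb_gt0 : 0 < Kbar V W K by rewrite /Kbar mulr_gt0 ?divr_gt0 ?addr_gt0.
have D_gt0 : 0 < Ccap V W K / W by rewrite /Ccap divr_gt0 // mulr_gt0.
set Kb := Kbar V W K; set D := Ccap V W K / W.
set F1 := kratio p (theta1 L V T); set F2 := kratio p (theta2 L W T).
have KbE : Kb = K - 1 * D by rewrite mul1r /Kb Kbar_eq_subCcap.
have k1_eqP x : F1 * Kb = x * Kb <-> F1 = x.
  by split=> [/(mulIf (lt0r_neq0 Kb_gt0))|->].
have k2_eqP x : K - F2 * D = K - x * D <-> F2 = x.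
  by split=> [/subrI/(mulIf (lt0r_neq0 D_gt0))|->].
split.
- by rewrite ler_pM2r // kratio_ge.
- by rewrite -[leRHS]mul1r ler_pM2r // kratio_le1.
- by rewrite KbE lerD2l lerN2 ler_pM2r // kratio_le1.
- by rewrite lerD2l lerN2 ler_pM2r // kratio_ge.
split.
- by apply: iff_trans (k1_eqP p) _; apply: kratio_eq.
- by rewrite -{2}[Kb]mul1r; apply: iff_trans (k1_eqP 1) _; apply: kratio_eq1.
- by apply: iff_trans (k2_eqP p) _; apply: kratio_eq.
- by rewrite KbE; apply: iff_trans (k2_eqP 1) _; apply: kratio_eq1.
Qed.
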